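(* For any $x\in\mathrm{St}(d,r)$, $\|\nabla\mathcal{L}(x)\|_F\le2\|\Lambda(x)\|_F$.
   Context: $\langle A,B\rangle=\mathrm{Tr}(AB^\top)$; $\mathrm{sym}(A)=\frac12(A+A^\top)$, $\mathrm{skew}(A)=\frac12(A-A^\top)$; $\|\cdot\|_F$ Frobenius norm. $\mathrm{St}(d,r)=\{x\in\mathbb{R}^{d\times r}:x^\top x=I_r\}$. $f:\mathbb{R}^{d\times r}\to\mathbb{R}$ is $C^2$, $\mathrm{grad} f(x)=\mathrm{skew}(\nabla f(x)x^\top)x$. For $\lambda>0$, $\Lambda(x)=\mathrm{grad} f(x)+\lambda x(x^\top x-I_r)$. For $\gamma>0$, the merit function is $\mathcal{L}(x)=f(x)-\frac12\langle\mathrm{sym}(x^\top\nabla f(x)),x^\top x-I_r\rangle+\frac\gamma4\|x^\top x-I_r\|_F^2$. *)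

From HB Require Import structures.
From mathcomp Require Import all_boot all_order all_algebra.
From mathcomp Require Import all_classical all_reals all_analysis.
Set Implicit Arguments. Unset Strict Implicit. Unset Printing Implicit Defensive.
Import Order.TTheory GRing.Theory Num.Theory.
Import numFieldNormedType.Exports.
Local Open Scope ring_scope.

Section Defs.
Variables (R : realType) (d r : nat).
Notation M := 'M[R]_(d, r).

Definition fip (m n : nat) (A B : 'M[R]_(m, n)) : R := \tr (A *m B^T).
Definition frob (m n : nat) (A : 'M[R]_(m, n)) : R :=
  Num.sqrt (\sum_(i < m) \sum_(j < n) A i j ^+ 2).
Definition msym (n : nat) (A : 'M[R]_n) : 'M[R]_n := 2^-1 *: (A + A^T).
Definition mskew (n : nat) (A : 'M[R]_n) : 'M[R]_n := 2^-1 *: (A - A^T).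

Definition egrad (F : M -> R^o) (x : M) : M :=
  \matrix_(i < d, j < r) ('D_(delta_mx i j) F x : R).

Definition stiefel (x : M) : Prop := x^T *m x = 1%:M.

Definition rgrad (f : M -> R^o) (x : M) : M :=
  mskew (egrad f x *m x^T) *m x.

Definition Lambda (f : M -> R^o) (lam : R) (x : M) : M :=
  rgrad f x + lam *: (x *m (x^T *m x - 1%:M)).

Definition merit (f : M -> R^o) (gam : R) (x : M) : R^o :=
  f x - 2^-1 * fip (msym (x^T *m egrad f x)) (x^T *m x - 1%:M)
      + gam / 4 * frob (x^T *m x - 1%:M) ^+ 2.

Definition C2 (f : M -> R^o) : Prop :=
  (forall x, differentiable f x) /\
  (forall x, differentiable (egrad f) x) /\
  (forall (i : 'I_d) (j : 'I_r), continuous (egrad (fun y => (egrad f y i j : R^o)))).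
End Defs.

From HB Require Import structures.
From mathcomp Require Import all_boot all_order all_algebra.
From mathcomp Require Import all_classical all_reals all_analysis.
From mathcomp Require Import ring lra.
Import Order.TTheory GRing.Theory Num.Theory.
Import numFieldNormedType.Exports.
Local Open Scope ring_scope.

(* Write G = egrad f x, L = skew(G x^T) x and P = x x^T.  On the Stiefel
   manifold the constraint residual c(y) = y^T y - I vanishes at x, so the
   correction terms of the merit function only contribute their first-order
   part, which gives  egrad (merit f gam) x = G - x sym(x^T G) = 2L - PL,
   while Lambda f lam x = L.  As P is an orthogonal projector,
   |2L - PL|^2 = 4|L|^2 - 3|PL|^2 <= 4|L|^2. *)

Section FrobeniusInnerProduct.
Local Set Implicit Arguments.
Variable R : realType.

Lemma fipE m n (A B : 'M[R]_(m, n)) :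
  fip A B = \sum_(i < m) \sum_(j < n) A i j * B i j.
Proof.
rewrite /fip /mxtrace; apply: eq_bigr => i _; rewrite mxE.
by apply: eq_bigr => j _; rewrite !mxE.
Qed.

Lemma fipC m n (A B : 'M[R]_(m, n)) : fip A B = fip B A.
Proof. by rewrite !fipE; apply: eq_bigr => i _; apply: eq_bigr => j _; rewrite mulrC. Qed.

Lemma fipDl m n (A B C : 'M[R]_(m, n)) : fip (A + B) C = fip A C + fip B C.
Proof. by rewrite /fip mulmxDl mxtraceD. Qed.

Lemma fipNl m n (A C : 'M[R]_(m, n)) : fip (- A) C = - fip A C.
Proof. by rewrite /fip mulNmx linearN. Qed.

Lemma fipZl m n k (A C : 'M[R]_(m, n)) : fip (k *: A) C = k * fip A C.
Proof. by rewrite /fip -scalemxAl mxtraceZ. Qed.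

Lemma fipDr m n (A B C : 'M[R]_(m, n)) : fip C (A + B) = fip C A + fip C B.
Proof. by rewrite fipC fipDl !(fipC _ C). Qed.

Lemma fipNr m n (A C : 'M[R]_(m, n)) : fip C (- A) = - fip C A.
Proof. by rewrite fipC fipNl fipC. Qed.

Lemma fipZr m n k (A C : 'M[R]_(m, n)) : fip C (k *: A) = k * fip C A.
Proof. by rewrite fipC fipZl fipC. Qed.

Lemma fip_mull m n p (A : 'M[R]_(m, p)) (B : 'M[R]_(m, n)) (C : 'M[R]_(n, p)) :
  fip A (B *m C) = fip (B^T *m A) C.
Proof. by rewrite /fip trmx_mul mulmxA mxtrace_mulC mulmxA. Qed.

Lemma fip_mulr m n p (A : 'M[R]_(m, p)) (B : 'M[R]_(m, n)) (C : 'M[R]_(n, p)) :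
  fip A (B *m C) = fip (A *m C^T) B.
Proof. by rewrite /fip trmx_mul mulmxA. Qed.

Lemma fip_delta m n (A : 'M[R]_(m, n)) i j : fip A (delta_mx i j) = A i j.
Proof.
rewrite fipE (bigD1 i) //= [X in _ + X]big1 => [|k /negbTE ki]; last first.
  by rewrite big1 // => l _; rewrite mxE ki mulr0.
rewrite addr0 (bigD1 j) //= [X in _ + X]big1 => [|l /negbTE lj].
  by rewrite mxE !eqxx mulr1 addr0.
by rewrite mxE lj andbF mulr0.
Qed.

Lemma fip_sym_delta m n (S : 'M[R]_n) (x : 'M[R]_(m, n)) i j : S^T = S ->
  fip S ((delta_mx i j)^T *m x + x^T *m delta_mx i j) = 2 * (x *m S) i j.
Proof.
move=> ST; rewrite fipDr fip_mulr fip_mull trmxK trmx_delta !fip_delta.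
have -> : (S *m x^T) j i = (x *m S) i j.
  by rewrite -[in RHS]ST -[in RHS](trmxK x) -trmx_mul [RHS]mxE.
by rewrite mulr_natl mulr2n.
Qed.

Lemma fip_ge0 m n (A : 'M[R]_(m, n)) : 0 <= fip A A.
Proof.
by rewrite fipE; apply: sumr_ge0 => i _; apply: sumr_ge0 => j _; rewrite -expr2 sqr_ge0.
Qed.

Lemma frob_ge0 m n (A : 'M[R]_(m, n)) : 0 <= frob A.
Proof. exact: sqrtr_ge0. Qed.

Lemma frob_sqr m n (A : 'M[R]_(m, n)) : frob A ^+ 2 = fip A A.
Proof.
rewrite /frob sqr_sqrtr; last first.
  by apply: sumr_ge0 => i _; apply: sumr_ge0 => j _; rewrite sqr_ge0.
by rewrite fipE; apply: eq_bigr => i _; apply: eq_bigr => j _; rewrite expr2.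
Qed.

Lemma fip_proj m n (P : 'M[R]_m) (L : 'M[R]_(m, n)) :
  P^T = P -> P *m P = P -> fip (P *m L) (P *m L) = fip L (P *m L).
Proof.
move=> PT PP; rewrite /fip trmx_mul PT mulmxA mxtrace_mulC !mulmxA PP.
by rewrite -mulmxA mxtrace_mulC.
Qed.

Lemma frob_proj_le m n (P : 'M[R]_m) (L : 'M[R]_(m, n)) :
  P^T = P -> P *m P = P -> frob (2 *: L - P *m L) <= 2 * frob L.
Proof.
move=> PT PP; rewrite -(ler_pXn2r (n := 2)) ?nnegrE ?mulr_ge0 ?frob_ge0 //.
rewrite exprMn !frob_sqr !(fipDl, fipDr, fipNl, fipNr, fipZl, fipZr).
rewrite fip_proj // (fipC (P *m L) L).
have := fip_ge0 (P *m L); rewrite fip_proj //.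
move: (fip L (P *m L)) (fip L L) => a b; lra.
Qed.

End FrobeniusInnerProduct.

Section StiefelAlgebra.
Local Set Implicit Arguments.
Variables (R : realType) (d r : nat) (x : 'M[R]_(d, r)).
Hypothesis x_stiefel : stiefel x.

Lemma stiefel_proj_tr : (x *m x^T)^T = x *m x^T.
Proof. by rewrite trmx_mul trmxK. Qed.

Lemma stiefel_proj_idem : (x *m x^T) *m (x *m x^T) = x *m x^T.
Proof. by rewrite mulmxA -(mulmxA x x^T x) x_stiefel mulmx1. Qed.

Lemma sub_msym_stiefel (G : 'M[R]_(d, r)) (L := mskew (G *m x^T) *m x) :
  G - x *m msym (x^T *m G) = 2 *: L - (x *m x^T) *m L.
Proof.
have -> : L = 2^-1 *: (G - x *m (G^T *m x)).
  by rewrite /L /mskew -scalemxAl mulmxBl -!mulmxA x_stiefel mulmx1 trmx_mul trmxK mulmxA.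
rewrite /msym -scalemxAr mulmxDr trmx_mul trmxK -scalemxAr mulmxBr !mulmxA.
rewrite -(mulmxA x x^T x) x_stiefel mulmx1 -!mulmxA.
move: (x *m (x^T *m G)) (x *m (G^T *m x)) => a b.
by apply/matrixP => i j; rewrite !mxE; field.
Qed.

Lemma frob_sub_msym_le (G : 'M[R]_(d, r)) :
  frob (G - x *m msym (x^T *m G)) <= 2 * frob (mskew (G *m x^T) *m x).
Proof.
rewrite sub_msym_stiefel.
by apply: frob_proj_le; [exact: stiefel_proj_tr | exact: stiefel_proj_idem].
Qed.

Lemma Lambda_stiefel (f : 'M[R]_(d, r) -> R^o) lam : Lambda f lam x = rgrad f x.
Proof. by rewrite /Lambda x_stiefel subrr mulmx0 scaler0 addr0. Qed.

Lemma stiefel_residual_line (v : 'M[R]_(d, r)) (h : R) :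
  (h *: v + x)^T *m (h *: v + x) - 1%:M =
  h *: (h *: (v^T *m v) + (v^T *m x + x^T *m v)).
Proof.
rewrite !linearD !linearZ /= !mulmxDl -!scalemxAl x_stiefel.
move: (v^T *m v) (v^T *m x) (x^T *m v) => a b c.
by apply/matrixP => i j; rewrite !mxE; ring.
Qed.

End StiefelAlgebra.

Section EntrywiseContinuity.
Local Set Implicit Arguments.
Variables (R : realType) (T : topologicalType) (t : T).

Definition mx_continuous_at m n (M : T -> 'M[R]_(m, n)) :=
  forall i j, {for t, continuous (fun s => M s i j)}.

Lemma continuous_at_mx m n (M : T -> 'M[R]_(m, n)) :
  {for t, continuous M} -> mx_continuous_at M.
Proof.
by move=> cM i j; apply: (cvg_comp M (fun A => A i j) cM); exact: coord_continuous.
Qed.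

Lemma mx_continuous_atD m n (M N : T -> 'M[R]_(m, n)) :
  mx_continuous_at M -> mx_continuous_at N -> mx_continuous_at (fun s => M s + N s).
Proof.
move=> cM cN i j; under [X in {for _, continuous X}]eq_fun do rewrite mxE.
exact: cvgD (cM i j) (cN i j).
Qed.

Lemma mx_continuous_atZ m n (k : T -> R) (M : T -> 'M[R]_(m, n)) :
  {for t, continuous k} -> mx_continuous_at M -> mx_continuous_at (fun s => k s *: M s).
Proof.
move=> ck cM i j; under [X in {for _, continuous X}]eq_fun do rewrite mxE.
exact: cvgM ck (cM i j).
Qed.

Lemma mx_continuous_at_tr m n (M : T -> 'M[R]_(m, n)) :
  mx_continuous_at M -> mx_continuous_at (fun s => (M s)^T).
Proof.
move=> cM i j; under [X in {for _, continuous X}]eq_fun do rewrite mxE.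
exact: cM j i.
Qed.

Lemma continuous_at_sum n (F : 'I_n -> T -> R) :
  (forall i, {for t, continuous (F i)}) ->
  {for t, continuous (fun s => \sum_(i < n) F i s)}.
Proof. by move=> cF; apply: cvg_big => // [|i _]; [exact: add_continuous | exact: cF]. Qed.

Lemma mx_continuous_at_mul m n p (M : T -> 'M[R]_(m, n)) (N : T -> 'M[R]_(n, p)) :
  mx_continuous_at M -> mx_continuous_at N -> mx_continuous_at (fun s => M s *m N s).
Proof.
move=> cM cN i j; under [X in {for _, continuous X}]eq_fun do rewrite mxE.
by apply: continuous_at_sum => k; exact: cvgM (cM i k) (cN k j).
Qed.

Lemma continuous_at_fip m n (M N : T -> 'M[R]_(m, n)) :
  mx_continuous_at M -> mx_continuous_at N ->
  {for t, continuous (fun s => fip (M s) (N s))}.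
Proof.
move=> cM cN; under [X in {for _, continuous X}]eq_fun do rewrite fipE.
apply: continuous_at_sum => i; apply: continuous_at_sum => j.
exact: cvgM (cM i j) (cN i j).
Qed.

End EntrywiseContinuity.

Section DirectionalDerivative.
Local Set Implicit Arguments.
Variable R : realType.
Context {V : normedModType R}.

Lemma continuous_line (a b : V) : continuous (fun h : R => h *: b + a).
Proof.
by move=> h; apply: cvgD; [apply: cvgZ; [exact: cvg_id | exact: cvg_cst] | exact: cvg_cst].
Qed.

Lemma deriveD_slope (f g : V -> R^o) (x v : V) (phi : R -> R) :
  derivable f x v -> {for 0, continuous phi} ->
  (forall h, g (h *: v + x) = f (h *: v + x) + h * phi h) ->
  'D_v g x = 'D_v f x + phi 0.
Proof.
move=> df cphi gE.
have gx : g x = f x by have := gE 0; rewrite scale0r add0r mul0r addr0.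
apply: cvg_lim => //; apply: cvg_trans (cvgD df ((continuous_withinNx _ _).1 cphi)).
apply: near_eq_cvg; near=> h.
have hn0 : h != 0 by near: h; exact: nbhs_dnbhs_neq.
by rewrite addrfctE /= gE gx /GRing.scale /=; field.
Unshelve. all: by end_near.
Qed.

End DirectionalDerivative.

Section MeritGradient.
Local Set Implicit Arguments.
Variables (R : realType) (d r : nat) (f : 'M[R]_(d, r) -> R^o) (gam : R).

Lemma derive_merit_stiefel (x v : 'M[R]_(d, r)) :
  stiefel x -> derivable f x v -> {for x, continuous (egrad f)} ->
  'D_v (merit f gam) x =
  'D_v f x - 2^-1 * fip (msym (x^T *m egrad f x)) (v^T *m x + x^T *m v).
Proof.
move=> xs df cG.
set C := v^T *m x + x^T *m v; set W := v^T *m v.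
have cG_line : {for 0, continuous (fun h : R => egrad f (h *: v + x))}.
  have := continuous_comp (g := egrad f) (continuous_line x v 0).
  by rewrite /= scale0r add0r; apply.
(* along the line, merit - f = h * phi h since the residual is h *: (h *: W + C) *)
pose phi h := - (2^-1 * fip (msym ((h *: v + x)^T *m egrad f (h *: v + x))) (h *: W + C))
  + gam / 4 * (h * fip (h *: W + C) (h *: W + C)).
rewrite (@deriveD_slope _ _ f _ _ _ phi) //.
- by rewrite /phi !scale0r !add0r mul0r mulr0 addr0.
- have cres := continuous_at_mx (continuous_line C W 0).
  have cline := continuous_at_mx (continuous_line x v 0).
  have cxG := mx_continuous_at_mul (mx_continuous_at_tr cline) (continuous_at_mx cG_line).
  rewrite /phi; apply: cvgD; [apply: cvgN |]; apply: cvgM; try exact: cvg_cst.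
  + apply: continuous_at_fip cres; apply: mx_continuous_atZ; first exact: cvg_cst.
    exact: mx_continuous_atD cxG (mx_continuous_at_tr cxG).
  + by apply: cvgM; [exact: cvg_id | exact: (continuous_at_fip cres cres)].
- move=> h; rewrite /merit /phi stiefel_residual_line // frob_sqr fipZl !fipZr.
  by rewrite -/C -/W; ring.
Qed.

Lemma egrad_merit_stiefel (x : 'M[R]_(d, r)) :
  stiefel x -> (forall v, derivable f x v) -> {for x, continuous (egrad f)} ->
  egrad (merit f gam) x = egrad f x - x *m msym (x^T *m egrad f x).
Proof.
move=> xs df cG; apply/matrixP => i j.
have symS : (msym (x^T *m egrad f x))^T = msym (x^T *m egrad f x).
  by rewrite /msym linearZ /= linearD /= trmxK addrC.
rewrite !mxE derive_merit_stiefel // fip_sym_delta // mulrA mulVf ?pnatr_eq0 // mul1r.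
by rewrite mxE.
Qed.

End MeritGradient.

Theorem lemma12 (R : realType) (d r : nat) (f : 'M[R]_(d, r) -> R^o)
  (lam gam : R) :
  C2 f -> 0 < lam -> 0 < gam ->
  forall x : 'M[R]_(d, r), stiefel x ->
  frob (egrad (merit f gam) x) <= 2 * frob (Lambda f lam x).
Proof.
move=> [df [dG _]] _ _ x xs.
rewrite egrad_merit_stiefel //.
- by rewrite Lambda_stiefel //; exact: frob_sub_msym_le.
- by move=> v; exact: diff_derivable.
- exact: differentiable_continuous.
Qed.
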